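(* Let $P,Q,R\in\mathbb P_d$. Then $$\operatorname{B}_R(P,Q)=\big\|\operatorname{Log}_R[P]-\operatorname{Log}_R[Q]\big\|_R^2,$$ where $\operatorname{Log}_R$ is the Bures–Wasserstein Riemannian logarithm at $R$ and $\|\cdot\|_R$ is the norm induced by the Bures–Wasserstein inner product on the tangent space at $R$.
   Context: $\mathbb P_d$ denotes the set of $d\times d$ complex positive definite matrices, $\mathbb H_d$ the Hermitian matrices. For $A,B\in\mathbb P_d$, the geometric mean is $A\#B:=A^{1/2}(A^{-1/2}BA^{-1/2})^{1/2}A^{1/2}$. The generalized fidelity between $P$ and $Q$ at base $R$ is $\operatorname{F}_R(P,Q):=\operatorname{Tr}\big[\sqrt{R^{1/2}PR^{1/2}}\,R^{-1}\sqrt{R^{1/2}QR^{1/2}}\big]$ (a complex number in general), and the squared generalized Bures distance is $\operatorname{B}_R(P,Q):=\operatorname{Tr}[P+Q]-2\,\mathrm{Re}\,\operatorname{F}_R(P,Q)$. For $R\in\mathbb P_d$ and $U\in\mathbb H_d$, $\mathcal L_R(U)$ denotes the unique solution $X$ of the Lyapunov equation $XR+RX=U$, and $\mathcal L_R^{-1}(Z):=ZR+RZ$. The Bures–Wasserstein inner product on $T_R\mathbb P_d\cong\mathbb H_d$ is $\langle U,V\rangle_R:=\operatorname{Tr}[\mathcal L_R(U)\,R\,\mathcal L_R(V)]$, with $\|U\|_R:=\sqrt{\langle U,U\rangle_R}$. The Bures–Wasserstein logarithm map is $\operatorname{Log}_R[P]:=\mathcal L_R^{-1}\big(R^{-1}\#P-\mathbb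 I\big)$. *)

From HB Require Import structures.
From mathcomp Require Import all_boot all_order all_algebra.
From mathcomp Require Import complex.
From mathcomp Require Import reals.
From Stdlib Require Import ClassicalEpsilon.

Set Implicit Arguments.
Unset Strict Implicit.
Unset Printing Implicit Defensive.

Import Order.TTheory GRing.Theory Num.Theory.
Local Open Scope ring_scope.

Section BW.
Variables (R : realType) (d : nat).
Local Notation C := R[i].
Local Notation M := 'M[C]_d.

Definition adjmx (A : M) : M := map_mx Num.conj (A^T).

Definition hermitian (A : M) : Prop := adjmx A = A.

Definition posdef (A : M) : Prop :=
  hermitian A /\ forall v : 'cV[C]_d, v != 0 ->
    0 < (map_mx Num.conj (v^T) *m A *m v) 0 0.

Definition psd (A : M) : Prop :=
  hermitian A /\ forall v : 'cV[C]_d,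
    0 <= (map_mx Num.conj (v^T) *m A *m v) 0 0.

(* the (unique) positive semidefinite square root of A, when it exists *)
Definition sqrtm (A : M) : M :=
  epsilon (inhabits (0 : M)) (fun S => psd S /\ S *m S = A).

Definition gmean (A B : M) : M :=
  sqrtm A *m sqrtm (invmx (sqrtm A) *m B *m invmx (sqrtm A)) *m sqrtm A.

Definition gfid (Rm P Q : M) : C :=
  \tr (sqrtm (sqrtm Rm *m P *m sqrtm Rm) *m invmx Rm
        *m sqrtm (sqrtm Rm *m Q *m sqrtm Rm)).

Definition gbures (Rm P Q : M) : C :=
  \tr (P + Q) - 2 * 'Re (gfid Rm P Q).

Definition lyap (Rm U : M) : M :=
  epsilon (inhabits (0 : M)) (fun X => X *m Rm + Rm *m X = U).

Definition lyap_inv (Rm Z : M) : M := Z *m Rm + Rm *m Z.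

Definition bw_inner (Rm U V : M) : C := \tr (lyap Rm U *m Rm *m lyap Rm V).
Definition bw_norm (Rm U : M) : C := sqrtC (bw_inner Rm U U).

Definition bw_log (Rm P : M) : M := lyap_inv Rm (gmean (invmx Rm) P - 1%:M).

End BW.

(* Write r := R^(1/2), U_X := (r X r)^(1/2) and A_X := r^-1 U_X r^-1, so that
   R^-1 # X = A_X and L_R(Log_R P - Log_R Q) = A_P - A_Q.  The squared norm is
   then tr((A_P - A_Q) R (A_P - A_Q)); since A_X R A_X = X and
   tr(A_Q R A_P) = tr(U_P R^-1 U_Q) = F_R(P, Q), whose conjugate is
   tr(A_P R A_Q), expanding the square gives tr P + tr Q - 2 Re F_R(P, Q).
   The analytic input, uniqueness of positive square roots and of solutions
   of the Lyapunov equation, both reduce to tr(X^* X) = 0 -> X = 0. *)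

From Pilot Require Import Defs.
From HB Require Import structures.
From mathcomp Require Import all_boot all_order all_algebra.
From mathcomp Require Import complex ring.
From mathcomp Require Import reals.
From Stdlib Require Import ClassicalEpsilon.
Import Order.TTheory GRing.Theory Num.Theory.
Local Open Scope ring_scope.
Local Open Scope sesquilinear_scope.
Set Implicit Arguments.
Unset Strict Implicit.

Lemma invmxM (F : comUnitRingType) n (A B : 'M[F]_n) :
  A \in unitmx -> B \in unitmx -> invmx (A *m B) = invmx B *m invmx A.
Proof.
move=> uA uB; have uAB : A *m B \in unitmx by rewrite unitmx_mul uA.
have eAB : A *m B *m (invmx B *m invmx A) = 1%:M.
  by rewrite mulmxA -(mulmxA A) mulmxV // mulmx1 mulmxV.
by rewrite -[LHS]mulmx1 -eAB mulKmx.
Qed.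

Section ConjugateTranspose.
Variable C : numClosedFieldType.

Lemma trmxC_mul m n p (A : 'M[C]_(m, n)) (B : 'M[C]_(n, p)) :
  (A *m B)^t* = B^t* *m A^t*.
Proof. by rewrite trmx_mul map_mxM. Qed.

Lemma trmxCB m n (A B : 'M[C]_(m, n)) : (A - B)^t* = A^t* - B^t*.
Proof. by rewrite linearB map_mxB. Qed.

Lemma trmxC_inv n (A : 'M[C]_n) : (invmx A)^t* = invmx (A^t*).
Proof. by rewrite trmx_inv map_invmx. Qed.

Lemma trmxC_eq0 m n (A : 'M[C]_(m, n)) : (A^t* == 0) = (A == 0).
Proof.
apply/eqP/eqP => [/(congr1 (fun X => X^t*))|->]; last by rewrite trmx0 map_mx0.
by rewrite trmxCK trmx0 map_mx0.
Qed.

Lemma mxtrace_trmxC n (A : 'M[C]_n) : \tr (A^t*) = (\tr A)^*.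
Proof. by rewrite trace_map_mx mxtrace_tr. Qed.

Lemma trmxC_mulmx_diag m n (X : 'M[C]_(m, n)) i :
  (X^t* *m X) i i = \sum_j `|X j i| ^+ 2.
Proof. by rewrite mxE; apply: eq_bigr => j _; rewrite !mxE normCKC. Qed.

Lemma mxtrace_trmxC_mul_ge0 m n (X : 'M[C]_(m, n)) : 0 <= \tr (X^t* *m X).
Proof.
apply: sumr_ge0 => i _; rewrite trmxC_mulmx_diag.
by apply: sumr_ge0 => j _; apply: exprn_ge0.
Qed.

Lemma mxtrace_trmxC_mul_eq0 m n (X : 'M[C]_(m, n)) :
  \tr (X^t* *m X) = 0 -> X = 0.
Proof.
have sq_ge0 (x : C) : 0 <= `|x| ^+ 2 by apply: exprn_ge0.
move/eqP; rewrite psumr_eq0 => [/allP col0|i _]; last first.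
  by rewrite trmxC_mulmx_diag sumr_ge0.
apply/matrixP => j i; have /implyP/(_ isT) := col0 i (mem_index_enum _).
rewrite trmxC_mulmx_diag psumr_eq0 // => /allP/(_ j (mem_index_enum _)).
by rewrite !mxE expf_eq0 normr_eq0 => /eqP.
Qed.

Lemma trmxC_congr_factor m n p (K : 'M[C]_(m, n)) (X : 'M[C]_(n, p)) :
  X^t* *m (K^t* *m K) *m X = (K *m X)^t* *m (K *m X).
Proof. by rewrite trmxC_mul !mulmxA. Qed.

End ConjugateTranspose.

Section Sandwich.
Variables (C : numClosedFieldType) (n : nat) (r A : 'M[C]_n).
Hypotheses (r_unit : r \in unitmx) (r_herm : r^t* = r) (r_sqr : r *m r = A).

(* For r = R^(1/2) and U = (r X r)^(1/2), [sandwich U] is the geometric mean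
   R^-1 # X. *)
Local Notation sandwich U := (invmx r *m U *m invmx r).

Lemma sandwich_mul U V :
  sandwich U *m A *m sandwich V = invmx r *m (U *m V) *m invmx r.
Proof.
by rewrite -r_sqr !mulmxA (mulmxKV r_unit) (mulmxK r_unit).
Qed.

Lemma sandwich_sqr P U :
  U *m U = r *m P *m r -> sandwich U *m A *m sandwich U = P.
Proof.
move=> UU; rewrite sandwich_mul UU !mulmxA (mulVmx r_unit) mul1mx.
by rewrite (mulmxK r_unit).
Qed.

Lemma sqr_invmx_root : invmx r *m invmx r = invmx A.
Proof. by rewrite -r_sqr invmxM. Qed.

Lemma mxtrace_sandwich_mul U V :
  \tr (sandwich U *m A *m sandwich V) = \tr (V *m invmx A *m U).
Proof.
rewrite sandwich_mul -mulmxA mxtrace_mulC -(mulmxA (U *m V)) sqr_invmx_root.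
by rewrite -mulmxA mxtrace_mulC.
Qed.

Lemma mxtrace_sandwich_subr_sqr P Q U V :
  U^t* = U -> V^t* = V -> U *m U = r *m P *m r -> V *m V = r *m Q *m r ->
  \tr ((sandwich U - sandwich V) *m A *m (sandwich U - sandwich V))
  = \tr (P + Q) - 2 * 'Re (\tr (U *m invmx A *m V)).
Proof.
move=> U_herm V_herm UU VV.
have A_herm : A^t* = A by rewrite -r_sqr trmxC_mul r_herm.
have trVU : \tr (V *m invmx A *m U) = (\tr (U *m invmx A *m V))^*.
  by rewrite -mxtrace_trmxC !trmxC_mul trmxC_inv A_herm U_herm V_herm mulmxA.
rewrite mulmxBl !mulmxBr !mulmxBl (sandwich_sqr UU) (sandwich_sqr VV).
rewrite !linearB /= !mxtrace_sandwich_mul trVU mxtraceD ReE.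
rewrite mulrC divfK ?pnatr_eq0 //; ring.
Qed.

End Sandwich.

Section PositiveMatrices.
Variables (R : realType) (d : nat).
Local Notation C := R[i].
Local Notation M := 'M[C]_d.
Implicit Types (A S T U X Y : M) (D : 'rV[C]_d).

Lemma psd_trmxC A : psd A -> A^t* = A.
Proof. by case. Qed.

Lemma posdef_psd A : posdef A -> psd A.
Proof.
move=> [hA pA]; split => // v; have [->|v_neq0] := eqVneq v 0.
  by rewrite mulmx0 mxE.
exact/ltW/pA.
Qed.

Lemma psd_congr A X : psd A -> psd (X^t* *m A *m X).
Proof.
move=> pdA; have hA := psd_trmxC pdA; case: pdA => _ pA; split.
  by rewrite /Defs.hermitian /adjmx !trmxC_mul trmxCK hA mulmxA.
by move=> v; have := pA (X *m v); rewrite trmxC_mul !mulmxA.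
Qed.

Lemma posdef_unitmx A : posdef A -> A \in unitmx.
Proof.
move=> [_ pA]; rewrite unitmxE unitfE; apply/det0P => -[v v_neq0 vA0].
have := pA (v^t*); rewrite trmxC_eq0 trmxCK vA0 mul0mx mxE ltxx.
by move/(_ v_neq0).
Qed.

Lemma hermitian_spectral A : Defs.hermitian A ->
  exists U D, U *m U^t* = 1%:M /\ A = U^t* *m diag_mx D *m U.
Proof.
move=> hA; have {}hA : A^t* = A := hA.
have /orthomx_spectralP eA : A \is normalmx.
  by apply/normalmxP; rewrite hA.
have U_unitary := spectral_unitarymx A.
exists (spectralmx A), (spectral_diag A).
have U_unit := unitarymx_unit U_unitary.
by rewrite -invmx_unitary // mulmxV.
Qed.

Lemma diag_mx_qform D (v : 'cV[C]_d) :
  (v^t* *m diag_mx D *m v) 0 0 = \sum_k D 0 k * `|v k 0| ^+ 2.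
Proof.
rewrite mul_mx_diag mxE; apply: eq_bigr => k _; rewrite !mxE normCKC; ring.
Qed.

Lemma spectral_qform_delta A U D i (e := delta_mx i 0 : 'cV[C]_d) :
  U *m U^t* = 1%:M -> A = U^t* *m diag_mx D *m U ->
  ((U^t* *m e)^t* *m A *m (U^t* *m e)) 0 0 = D 0 i.
Proof.
move=> UU eA; rewrite trmxC_mul trmxCK eA -!mulmxA !(mulmxA U) UU !mul1mx.
rewrite mulmxA diag_mx_qform (bigD1 i) //= big1 ?addr0.
  by rewrite mxE eqxx normr1 expr1n mulr1.
by move=> k /negbTE ki; rewrite mxE ki normr0 expr0n mulr0.
Qed.

Lemma psd_spectral A : psd A ->
  exists U D, [/\ U *m U^t* = 1%:M, A = U^t* *m diag_mx D *m U &
                  forall i, 0 <= D 0 i].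
Proof.
move=> pA; have [U [D [UU eA]]] := hermitian_spectral pA.1.
exists U, D; split => // i.
by rewrite -(spectral_qform_delta i UU eA); apply: pA.2.
Qed.

Lemma psd_diag_mx D : (forall i, 0 <= D 0 i) -> psd (diag_mx D).
Proof.
move=> D_ge0; split.
  apply/matrixP => k l; rewrite !mxE; case: eqVneq => [->|_].
    by rewrite !mulr1n conj_Creal // ger0_real.
  by rewrite !mulr0n rmorph0.
move=> v; rewrite diag_mx_qform; apply: sumr_ge0 => k _.
by rewrite mulr_ge0 ?exprn_ge0.
Qed.

Lemma psd_sqrt_exists A : psd A -> exists S, psd S /\ S *m S = A.
Proof.
move=> /psd_spectral [U [D [UU eA D_ge0]]].
pose E := \row_j sqrtC (D 0 j).
have E_ge0 j : 0 <= E 0 j by rewrite mxE sqrtC_ge0.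
exists (U^t* *m diag_mx E *m U); split; first exact/psd_congr/psd_diag_mx.
have EE : diag_mx E *m diag_mx E = diag_mx D.
  by rewrite mulmx_diag; congr diag_mx; apply/rowP => j; rewrite !mxE -expr2 sqrtCK.
by rewrite -!mulmxA (mulmxA U) UU mul1mx (mulmxA (diag_mx E)) EE eA mulmxA.
Qed.

Lemma psd_factor S : psd S -> exists K : M, S = K^t* *m K.
Proof.
move=> /psd_sqrt_exists [K [pK KK]].
by exists K; rewrite (psd_trmxC pK) KK.
Qed.

Lemma psd_mxtrace_congr_ge0 S X : psd S -> 0 <= \tr (X^t* *m S *m X).
Proof.
by move=> /psd_factor [K ->]; rewrite trmxC_congr_factor mxtrace_trmxC_mul_ge0.
Qed.

Lemma psd_mxtrace_congr_eq0 S X : psd S ->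
  \tr (X^t* *m S *m X) = 0 -> S *m X = 0.
Proof.
move=> /psd_factor [K ->]; rewrite trmxC_congr_factor.
by move=> /mxtrace_trmxC_mul_eq0 KX0; rewrite -mulmxA KX0 mulmx0.
Qed.

(* With D := S - T one has S D + D T = 0, so tr(D S D) + tr(D T D) = 0; both
   terms are nonnegative, hence S D = T D = 0 and D^2 = 0. *)
Lemma psd_sqrt_unique S T : psd S -> psd T -> S *m S = T *m T -> S = T.
Proof.
move=> pS pT ST; set D := S - T.
have hD : D^t* = D by rewrite trmxCB !psd_trmxC.
have SD_DT : S *m D + D *m T = 0.
  by rewrite mulmxBr mulmxBl ST addrA subrK subrr.
have tr0 : \tr (D^t* *m S *m D) + \tr (D^t* *m T *m D) = 0.
  rewrite hD [\tr (D *m T *m D)]mxtrace_mulC -mxtraceD -!mulmxA -mulmxDr.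
  by rewrite SD_DT mulmx0 mxtrace0.
move/eqP: tr0; rewrite paddr_eq0 ?psd_mxtrace_congr_ge0 //.
move=> /andP[/eqP/(psd_mxtrace_congr_eq0 pS) SD0 /eqP/(psd_mxtrace_congr_eq0 pT) TD0].
apply/eqP; rewrite -subr_eq0; apply/eqP/mxtrace_trmxC_mul_eq0.
by rewrite hD {1}/D mulmxBl SD0 TD0 subrr mxtrace0.
Qed.

Lemma posdef_lyap_eq0 A Y : posdef A -> Y *m A + A *m Y = 0 -> Y = 0.
Proof.
move=> pdA YA_AY; have pA := posdef_psd pdA.
have tr0 : \tr ((Y^t*)^t* *m A *m Y^t*) + \tr (Y^t* *m A *m Y) = 0.
  rewrite trmxCK mxtrace_mulC mulmxA -mxtraceD -!mulmxA -mulmxDr YA_AY.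
  by rewrite mulmx0 mxtrace0.
move/eqP: tr0; rewrite paddr_eq0 ?psd_mxtrace_congr_ge0 //.
move=> /andP[_ /eqP/(psd_mxtrace_congr_eq0 pA) AY0].
by rewrite -[Y]mul1mx -(mulVmx (posdef_unitmx pdA)) -mulmxA AY0 mulmx0.
Qed.

Lemma sqrtm_spec A : psd A -> psd (sqrtm A) /\ sqrtm A *m sqrtm A = A.
Proof. by move=> /psd_sqrt_exists; apply: (epsilon_spec _ (fun S : M => _)). Qed.

Lemma sqrtm_unique A S : psd S -> S *m S = A -> sqrtm A = S.
Proof.
move=> pS SS; have [psqrt sqrt_sqr] : psd (sqrtm A) /\ sqrtm A *m sqrtm A = A.
  by apply: (epsilon_spec _ (fun S : M => psd S /\ S *m S = A)); exists S.
by apply: psd_sqrt_unique; rewrite // sqrt_sqr SS.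
Qed.

Lemma lyap_invB A X Y : lyap_inv A (X - Y) = lyap_inv A X - lyap_inv A Y.
Proof. by rewrite /lyap_inv mulmxBl mulmxBr addrACA opprD. Qed.

Lemma lyap_invK A : posdef A -> cancel (lyap_inv A) (lyap A).
Proof.
move=> pdA Z; set X := lyap A (lyap_inv A Z).
have X_sol : X *m A + A *m X = lyap_inv A Z.
  by apply: (epsilon_spec _ (fun X : M => X *m A + A *m X = _)); exists Z.
apply/eqP; rewrite -subr_eq0; apply/eqP/(posdef_lyap_eq0 pdA).
by rewrite mulmxBl mulmxBr addrACA X_sol /lyap_inv -opprD subrr.
Qed.

Lemma sqrtm_unitmx A : posdef A -> sqrtm A \in unitmx.
Proof.
move=> pdA; have [_ sqrt_sqr] := sqrtm_spec (posdef_psd pdA).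
by have := posdef_unitmx pdA; rewrite -{1}sqrt_sqr unitmx_mul => /andP[].
Qed.

Lemma sqrtm_invmx A : posdef A -> sqrtm (invmx A) = invmx (sqrtm A).
Proof.
move=> pdA; have [psqrt sqrt_sqr] := sqrtm_spec (posdef_psd pdA).
have sqrt_unit := sqrtm_unitmx pdA.
apply: sqrtm_unique; last by rewrite -(invmxM sqrt_unit sqrt_unit) sqrt_sqr.
have := psd_congr (invmx (sqrtm A)) psqrt.
by rewrite trmxC_inv (psd_trmxC psqrt) (mulVmx sqrt_unit) mul1mx.
Qed.

Lemma gmean_invmx A P : posdef A ->
  gmean (invmx A) P
  = invmx (sqrtm A) *m sqrtm (sqrtm A *m P *m sqrtm A) *m invmx (sqrtm A).
Proof. by move=> pdA; rewrite /gmean (sqrtm_invmx pdA) invmxK. Qed.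

Lemma lyap_bw_logB A P Q : posdef A ->
  lyap A (bw_log A P - bw_log A Q) = gmean (invmx A) P - gmean (invmx A) Q.
Proof.
move=> pdA; rewrite /bw_log -lyap_invB (lyap_invK pdA).
by rewrite opprB addrA subrK.
Qed.

Lemma psd_sqrtm_congr A X :
  psd A -> psd X -> psd (sqrtm A *m X *m sqrtm A).
Proof.
move=> pA pX; have [psqrt _] := sqrtm_spec pA.
by have := psd_congr (sqrtm A) pX; rewrite (psd_trmxC psqrt).
Qed.

End PositiveMatrices.

Theorem theorem1 (R : realType) (d : nat) (P Q Rm : 'M[R[i]]_d) :
  posdef P -> posdef Q -> posdef Rm ->
  gbures Rm P Q = bw_norm Rm (bw_log Rm P - bw_log Rm Q) ^+ 2.
Proof.
move=> pdP pdQ pdR; have psdR := posdef_psd pdR.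
have [psd_r r_sqr] := sqrtm_spec psdR.
have [psd_UP UP_sqr] := sqrtm_spec (psd_sqrtm_congr psdR (posdef_psd pdP)).
have [psd_UQ UQ_sqr] := sqrtm_spec (psd_sqrtm_congr psdR (posdef_psd pdQ)).
rewrite /gbures /gfid /bw_norm sqrtCK /bw_inner (lyap_bw_logB P Q pdR).
rewrite (gmean_invmx P pdR) (gmean_invmx Q pdR).
by rewrite (mxtrace_sandwich_subr_sqr (sqrtm_unitmx pdR) (psd_trmxC psd_r) r_sqr
             (psd_trmxC psd_UP) (psd_trmxC psd_UQ) UP_sqr UQ_sqr).
Qed.
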